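(* Let $\gamma>1$, let $\bar\rho$ and $d$ be as in the context with $\phi$ sufficiently smooth, and let $i\ge1$ be an integer. Then for every sufficiently smooth $X:[0,1]\to\mathbb R$, $$\mathcal D_iL_0X=\mathcal L_i\mathcal D_iX+\sum_{j=0}^{i-1}q_{ij}\,\mathcal D_{i-j}X,\qquad q_{ij}=\sum_{k=1}^{2+j}\frac{\sum_{\ell=0}^{k}c_{ijk\ell}\,\partial_r^\ell d}{r^{2+j-k}},$$ for some functions $c_{ijk\ell}$ that are bounded on $[0,1]$.
   Context: $\phi\in C^k[0,1]$ with $\phi>0$ and $\phi'(0)=0$; $\bar\rho:=\phi$ and $d(r):=\bar\rho(r)^{-\gamma}\int_r^1\ell\bar\rho(\ell)\,d\ell$. $D_rf=r^{-2}\partial_r(r^2f)$; $\mathcal D_0=\mathrm{id}$, $\mathcal D_j=(\partial_rD_r)^{j/2}$ for $j$ even and $\mathcal D_j=D_r(\partial_rD_r)^{(j-1)/2}$ for $j$ odd. For $m\ge0$: $L_mf=\frac{1}{\bar\rho^{1+m(\gamma-1)}d^m}\partial_r\big(\bar\rho^{\gamma+m(\gamma-1)}d^{1+m}D_rf\big)$ and $L_m^*h=\frac{1}{\bar\rho^{1+m(\gamma-1)}d^m}D_r\big(\bar\rho^{\gamma+m(\gamma-1)}d^{1+m}\partial_rh\big)$. Then $\mathcal L_j\mathcal D_j:=L_j\mathcal D_j$ if $j$ is even and $\mathcal L_j\mathcal D_j:=L_j^*\mathcal D_j$ if $j$ is odd. *)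

From Stdlib Require Import Reals.
From Coquelicot Require Import Coquelicot.
Open Scope R_scope.

(* A function in C^N[0,1] is represented by a C^N extension to R
   (every C^N[0,1] function has one); only values on [0,1] matter below. *)
Definition Ck (N : nat) (f : R -> R) : Prop :=
  (forall n x, (n <= N)%nat -> ex_derive_n f n x) /\
  (forall x, continuous (Derive_n f N) x).

Definition rhobar (phi : R -> R) : R -> R := phi.

Definition dfun (gamma : R) (phi : R -> R) (r : R) : R :=
  Rpower (rhobar phi r) (- gamma) * RInt (fun l => l * rhobar phi l) r 1.

Definition Dr (f : R -> R) : R -> R :=
  fun r => / (r ^ 2) * Derive (fun s => s ^ 2 * f s) r.

Definition dDr (f : R -> R) : R -> R := Derive (Dr f).

Definition calD (j : nat) (f : R -> R) : R -> R :=
  if Nat.even j then Nat.iter (Nat.div j 2) dDr f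
  else Dr (Nat.iter (Nat.div (j - 1) 2) dDr f).

Definition Lm (m : nat) (gamma : R) (phi : R -> R) (f : R -> R) : R -> R :=
  fun r => / (Rpower (rhobar phi r) (1 + INR m * (gamma - 1)) * (dfun gamma phi r) ^ m)
    * Derive (fun s => Rpower (rhobar phi s) (gamma + INR m * (gamma - 1))
                        * (dfun gamma phi s) ^ (1 + m) * Dr f s) r.

Definition Lmstar (m : nat) (gamma : R) (phi : R -> R) (h : R -> R) : R -> R :=
  fun r => / (Rpower (rhobar phi r) (1 + INR m * (gamma - 1)) * (dfun gamma phi r) ^ m)
    * Dr (fun s => Rpower (rhobar phi s) (gamma + INR m * (gamma - 1))
                    * (dfun gamma phi s) ^ (1 + m) * Derive h s) r.

Definition calLD (j : nat) (gamma : R) (phi : R -> R) (f : R -> R) : R -> R :=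
  if Nat.even j then Lm j gamma phi (calD j f) else Lmstar j gamma phi (calD j f).

Definition qij (c : nat -> nat -> nat -> nat -> R -> R) (gamma : R) (phi : R -> R)
  (i j : nat) (r : R) : R :=
  sum_n_m (fun k =>
      sum_n_m (fun l => c i j k l r * Derive_n (dfun gamma phi) l r) 0 k
      / r ^ (2 + j - k)) 1 (2 + j).

From Stdlib Require Import Reals Lra Lia.
From Coquelicot Require Import Coquelicot.
Open Scope R_scope.

(* Put I(r) = int_r^1 l phi(l) dl and w = I / phi.  Since
   rho^{1+m(gamma-1)} d^m = phi w^m, the operators take the first-order forms
       L_m f = v_m D_r f + w d_r D_r f,     L_m^* h = v_m d_r h + w D_r d_r h,
   with v_m = -r + m w'  (Lm_form, Lmstar_form).  Writing calD_{i+1} = next_op i calD_i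
   (next_op = D_r after an even index, d_r after an odd one), these forms give
       next_op i (calL_i calD_i X) = calL_{i+1} calD_{i+1} X + (M_i / r) calD_{i+1} X
   with M_i = r v_i' +- 2 v_i  (next_op_calLD).  Induction on i then yields
       calD_i L_0 X = calL_i calD_i X + sum_{j<i} G_j / r^{j+1} calD_{i-j} X
   with each G_j smooth on a neighbourhood of [0,1]  (commutator_expansion).
   Finally G_j = c_0 d + c_1 d' with c_l = G_j d^{(l)} / (d^2 + d'^2), continuous
   and hence bounded on [0,1] because d > 0 on [0,1) and d'(1) < 0; these are the
   coefficients c_{ij1l} of q_ij, all others being zero. *)

Lemma locally_interval (a b x : R) : a < x < b -> locally x (fun t => a < t < b).
Proof.
  intros [Hax Hxb].
  assert (He : 0 < Rmin (x - a) (b - x)) by (apply Rmin_case; lra).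
  exists (mkposreal _ He); intros t Ht.
  change (Rabs (t - x) < Rmin (x - a) (b - x)) in Ht.
  apply Rabs_lt_between in Ht.
  pose proof (Rmin_l (x - a) (b - x)); pose proof (Rmin_r (x - a) (b - x)); lra.
Qed.

Lemma locally_interval_eq (a b x : R) (f g : R -> R) :
  a < x < b -> (forall t, a < t < b -> f t = g t) -> locally x (fun t => f t = g t).
Proof.
  intros Hx E. generalize (locally_interval a b x Hx); apply filter_imp; auto.
Qed.

Lemma continuous_inv_pt (f : R -> R) x :
  continuous f x -> f x <> 0 -> continuous (fun y => / f y) x.
Proof.
  intros Hf Hn. apply (continuous_comp f Rinv); auto.
  apply continuity_pt_filterlim, continuity_pt_inv; auto.
  apply derivable_continuous_pt, derivable_pt_id.
Qed.

(* Real-valued specialisations, convenient for higher-order unification. *)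
Lemma continuous_plus_R (f g : R -> R) x : continuous f x -> continuous g x ->
  continuous (fun y => f y + g y) x.
Proof. intros; apply (continuous_plus f g); auto. Qed.

Lemma continuous_mult_R (f g : R -> R) x : continuous f x -> continuous g x ->
  continuous (fun y => f y * g y) x.
Proof. intros; apply (continuous_mult f g); auto. Qed.

Lemma ex_derive_continuous_R (f : R -> R) x : ex_derive f x -> continuous f x.
Proof. apply (ex_derive_continuous (K := R_AbsRing) (V := R_NormedModule)). Qed.

Fixpoint smooth_on (a b : R) (k : nat) (f : R -> R) : Prop :=
  match k with
  | O => forall x, a < x < b -> continuous f x
  | S k => (forall x, a < x < b -> ex_derive f x) /\ smooth_on a b k (Derive f)
  end.

Section Smoothness.
Variables a b : R.

Lemma smooth_ext k : forall f g, (forall x, a < x < b -> f x = g x) ->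
  smooth_on a b k f -> smooth_on a b k g.
Proof.
  induction k as [|k IH]; simpl; intros f g E Hf.
  - intros x Hx. apply (continuous_ext_loc _ _ x (locally_interval_eq a b x f g Hx E)); auto.
  - destruct Hf as [Hd Hk]; split.
    + intros x Hx. apply (ex_derive_ext_loc f g); auto.
      apply (locally_interval_eq a b x f g Hx E).
    + apply (IH (Derive f)); auto. intros x Hx.
      apply Derive_ext_loc, (locally_interval_eq a b x f g Hx E).
Qed.

Lemma smooth_pred k f : smooth_on a b (S k) f -> smooth_on a b k f.
Proof.
  revert f; induction k as [|k IH]; simpl; intros f [Hd Hk].
  - intros x Hx; apply ex_derive_continuous_R; auto.
  - split; auto.
Qed.

Lemma smooth_le k k' f : (k <= k')%nat -> smooth_on a b k' f -> smooth_on a b k f.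
Proof. induction 1; auto. intros Hf; apply IHle, smooth_pred; auto. Qed.

Lemma smooth_Derive k f : smooth_on a b (S k) f -> smooth_on a b k (Derive f).
Proof. simpl; tauto. Qed.

Lemma smooth_ex_derive k f x : smooth_on a b (S k) f -> a < x < b -> ex_derive f x.
Proof. simpl; intros [Hd _]; auto. Qed.

Lemma smooth_continuous k f x : smooth_on a b k f -> a < x < b -> continuous f x.
Proof. intros Hf Hx. apply (smooth_le 0 k) in Hf; [apply Hf; auto | lia]. Qed.

Lemma smooth_const k c : smooth_on a b k (fun _ => c).
Proof.
  revert c; induction k as [|k IH]; simpl; intros c.
  - intros; apply continuous_const.
  - split; [intros; apply ex_derive_const|].
    apply (smooth_ext _ (fun _ => 0)); auto. intros; rewrite Derive_const; auto.
Qed.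

Lemma smooth_id k : smooth_on a b k (fun x => x).
Proof.
  destruct k; simpl.
  - intros; apply continuous_id.
  - split; [intros; apply ex_derive_id|].
    apply (smooth_ext _ (fun _ => 1)); [intros x _; symmetry; apply Derive_id|].
    apply smooth_const.
Qed.

Lemma smooth_plus k : forall f g, smooth_on a b k f -> smooth_on a b k g ->
  smooth_on a b k (fun x => f x + g x).
Proof.
  induction k as [|k IH]; simpl; intros f g Hf Hg.
  - intros; apply continuous_plus_R; auto.
  - destruct Hf as [Fd Fk]; destruct Hg as [Gd Gk]; split.
    + intros; apply (ex_derive_plus f g); auto.
    + apply (smooth_ext _ (fun x => Derive f x + Derive g x)); auto.
      intros; rewrite Derive_plus; auto.
Qed.

Lemma smooth_mult k : forall f g, smooth_on a b k f -> smooth_on a b k g ->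
  smooth_on a b k (fun x => f x * g x).
Proof.
  induction k as [|k IH]; intros f g Hf Hg.
  - simpl in *; intros; apply continuous_mult_R; auto.
  - pose proof (smooth_pred _ _ Hf) as Hf'; pose proof (smooth_pred _ _ Hg) as Hg'.
    destruct Hf as [Fd Fk]; destruct Hg as [Gd Gk]; split.
    + intros; apply ex_derive_mult; auto.
    + apply (smooth_ext _ (fun x => Derive f x * g x + f x * Derive g x)).
      { intros; rewrite Derive_mult; auto. }
      apply smooth_plus; apply IH; auto.
Qed.

Lemma smooth_scal k c f : smooth_on a b k f -> smooth_on a b k (fun x => c * f x).
Proof. intros; apply smooth_mult; auto; apply smooth_const. Qed.

Lemma smooth_minus k f g : smooth_on a b k f -> smooth_on a b k g ->
  smooth_on a b k (fun x => f x - g x).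
Proof.
  intros. apply (smooth_ext _ (fun x => f x + (-1) * g x)); [intros; ring|].
  apply smooth_plus; auto; apply smooth_scal; auto.
Qed.

Lemma smooth_inv k : forall f, (forall x, a < x < b -> f x <> 0) ->
  smooth_on a b k f -> smooth_on a b k (fun x => / f x).
Proof.
  induction k as [|k IH]; intros f Hn Hf.
  - simpl in *; intros x Hx; apply continuous_inv_pt; auto.
  - pose proof (smooth_pred _ _ Hf) as Hf'. destruct Hf as [Fd Fk]; split.
    + intros; apply ex_derive_inv; auto.
    + apply (smooth_ext _ (fun x => (-1) * Derive f x * (/ f x * / f x))).
      { intros x Hx; rewrite Derive_inv; auto. field; auto. }
      apply smooth_mult; [apply smooth_scal; auto|].
      apply smooth_mult; apply IH; auto.
Qed.

End Smoothness.

Lemma smooth_subinterval a b a' b' k f : a <= a' -> b' <= b ->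
  smooth_on a b k f -> smooth_on a' b' k f.
Proof.
  intros Ha Hb; revert f; induction k as [|k IH]; simpl; intros f Hf.
  - intros x Hx; apply Hf; lra.
  - destruct Hf as [Hd Hk]; split; auto. intros x Hx; apply Hd; lra.
Qed.

Lemma Ck_smooth N f a b : Ck N f -> smooth_on a b N f.
Proof.
  intros [Hd Hc].
  assert (K : forall k n, (n + k = N)%nat -> smooth_on a b k (Derive_n f n)).
  { induction k as [|k IH]; intros n Hn; simpl.
    - intros x _. rewrite Nat.add_0_r in Hn; subst; apply Hc.
    - split; [intros x _; apply (Hd (S n) x); lia | apply (IH (S n)); lia]. }
  apply (K N 0%nat); lia.
Qed.

Lemma Dr_expand f x : ex_derive f x -> x <> 0 -> Dr f x = Derive f x + 2 / x * f x.
Proof.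
  intros Hf Hx; unfold Dr.
  rewrite (Derive_mult (fun s => s ^ 2) f); auto.
  - rewrite (Derive_pow (fun s => s)), Derive_id by apply ex_derive_id.
    simpl; field; auto.
  - apply (ex_derive_pow (fun s => s)), ex_derive_id.
Qed.

Lemma Dr_ext_loc f g x : locally x (fun t => f t = g t) -> Dr f x = Dr g x.
Proof.
  intros H; unfold Dr; f_equal. apply Derive_ext_loc.
  apply (filter_imp (fun t => f t = g t)); auto. intros t ->; auto.
Qed.

Lemma Dr_plus f g x : ex_derive f x -> ex_derive g x -> x <> 0 ->
  Dr (fun s => f s + g s) x = Dr f x + Dr g x.
Proof.
  intros Hf Hg Hx. rewrite !Dr_expand; auto; [|apply (ex_derive_plus f g); auto].
  rewrite Derive_plus; auto; ring.
Qed.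

Lemma Dr_mult f g x : ex_derive f x -> ex_derive g x -> x <> 0 ->
  Dr (fun s => f s * g s) x = Derive f x * g x + f x * Dr g x.
Proof.
  intros Hf Hg Hx. rewrite !Dr_expand; auto; [|apply ex_derive_mult; auto].
  rewrite Derive_mult; auto; ring.
Qed.

Lemma smooth_Dr a b k f : 0 <= a -> smooth_on a b (S k) f -> smooth_on a b k (Dr f).
Proof.
  intros Ha Hf. apply (smooth_ext _ _ _ (fun x => Derive f x + 2 * / x * f x)).
  { intros x Hx. rewrite Dr_expand; [field; lra | eapply smooth_ex_derive; eauto | lra]. }
  apply smooth_plus; [apply smooth_Derive; auto|].
  apply smooth_mult; [apply smooth_scal, smooth_inv; [intros; lra | apply smooth_id]|].
  apply smooth_pred; auto.
Qed.

(* The operator producing calD_{m+1} from calD_m: D_r after an even index,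
   d/dr after an odd one. *)
Definition next_op (m : nat) (f : R -> R) : R -> R :=
  if Nat.even m then Dr f else Derive f.

Lemma even_double p : Nat.even (2 * p) = true.
Proof. rewrite Nat.even_mul; reflexivity. Qed.

Lemma even_double_S p : Nat.even (S (2 * p)) = false.
Proof. rewrite Nat.even_succ, <- Nat.negb_even, even_double; reflexivity. Qed.

Lemma calD_even p f : calD (2 * p) f = Nat.iter p dDr f.
Proof. unfold calD. rewrite even_double, Nat.mul_comm, Nat.div_mul; auto. Qed.

Lemma calD_odd p f : calD (S (2 * p)) f = Dr (Nat.iter p dDr f).
Proof.
  unfold calD. rewrite even_double_S.
  replace (S (2 * p) - 1)%nat with (p * 2)%nat by lia. rewrite Nat.div_mul; auto.
Qed.

Lemma calD_S m f : calD (S m) f = next_op m (calD m f).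
Proof.
  unfold next_op. destruct (Nat.Even_or_Odd m) as [[p ->]|[p ->]].
  - rewrite even_double, calD_odd, calD_even; auto.
  - replace (2 * p + 1)%nat with (S (2 * p)) by lia.
    replace (S (S (2 * p))) with (2 * S p)%nat by lia.
    rewrite even_double_S, calD_even, calD_odd; reflexivity.
Qed.

Lemma smooth_calD b m : forall k f, smooth_on 0 b (m + k) f -> smooth_on 0 b k (calD m f).
Proof.
  induction m as [|m IH]; intros k f Hf; [exact Hf|].
  rewrite calD_S. replace (S m + k)%nat with (m + S k)%nat in Hf by lia.
  apply IH in Hf. unfold next_op; destruct (Nat.even m).
  - apply smooth_Dr; auto; lra.
  - apply smooth_Derive; auto.
Qed.

Fixpoint sum_lt (n : nat) (F : nat -> R) : R :=
  match n with O => 0 | S n => sum_lt n F + F n end.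

Lemma sum_lt_ext n F G : (forall j, (j < n)%nat -> F j = G j) -> sum_lt n F = sum_lt n G.
Proof. induction n; simpl; intros H; auto. rewrite IHn, H; auto. Qed.

Lemma sum_lt_plus n F G : sum_lt n (fun j => F j + G j) = sum_lt n F + sum_lt n G.
Proof. induction n; simpl; [ring | rewrite IHn; ring]. Qed.

Lemma sum_lt_shift n F : sum_lt (S n) F = F O + sum_lt n (fun j => F (S j)).
Proof. induction n; simpl in *; [ring|]. rewrite IHn; ring. Qed.

Lemma sum_n_m_sum_lt n F : sum_n_m F 0 n = sum_lt (S n) F.
Proof.
  induction n.
  - rewrite sum_n_n; simpl; rewrite Rplus_0_l; reflexivity.
  - rewrite sum_n_Sm, IHn by lia; reflexivity.
Qed.

Lemma Derive_sum_lt n (T : nat -> R -> R) x :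
  (forall j, (j < n)%nat -> ex_derive (T j) x) ->
  ex_derive (fun s => sum_lt n (fun j => T j s)) x /\
  Derive (fun s => sum_lt n (fun j => T j s)) x = sum_lt n (fun j => Derive (T j) x).
Proof.
  induction n; simpl; intros H.
  - split; [apply ex_derive_const | apply Derive_const].
  - destruct IHn as [E D]; [intros; apply H; lia|].
    split; [apply (ex_derive_plus (fun s => sum_lt n (fun j => T j s)) (T n)); auto|].
    rewrite (Derive_plus (fun s => sum_lt n (fun j => T j s)) (T n)); auto. f_equal; exact D.
Qed.

Section NextOp.
Variable m : nat.

Lemma next_op_ext f g x : (forall t, 0 < t < 1 -> f t = g t) -> 0 < x < 1 ->
  next_op m f x = next_op m g x.
Proof.
  intros E Hx. pose proof (locally_interval_eq 0 1 x f g Hx E) as L.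
  unfold next_op; destruct (Nat.even m); [apply Dr_ext_loc | apply Derive_ext_loc]; auto.
Qed.

Lemma next_op_plus f g x : ex_derive f x -> ex_derive g x -> x <> 0 ->
  next_op m (fun s => f s + g s) x = next_op m f x + next_op m g x.
Proof.
  intros. unfold next_op; destruct (Nat.even m); [apply Dr_plus | apply Derive_plus]; auto.
Qed.

Lemma next_op_mult f g x : ex_derive f x -> ex_derive g x -> x <> 0 ->
  next_op m (fun s => f s * g s) x = Derive f x * g x + f x * next_op m g x.
Proof.
  intros. unfold next_op; destruct (Nat.even m); [apply Dr_mult | apply Derive_mult]; auto.
Qed.

Lemma next_op_sum n (T : nat -> R -> R) x : x <> 0 ->
  (forall j, (j < n)%nat -> ex_derive (T j) x) ->
  next_op m (fun s => sum_lt n (fun j => T j s)) x = sum_lt n (fun j => next_op m (T j) x).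
Proof.
  intros Hx H. destruct (Derive_sum_lt n T x H) as [E D].
  unfold next_op; destruct (Nat.even m); [|exact D].
  rewrite Dr_expand, D; auto. clear E D.
  induction n; simpl; [ring|].
  rewrite <- IHn by (intros; apply H; lia).
  rewrite (Dr_expand (T n)); auto. ring.
Qed.

End NextOp.

(* The parity defect of [next_op]: applied to calD_{i-j} it is calD_{i+1-j}
   up to the zeroth-order term (sg i j) (2/r). *)
Definition sg (i j : nat) : R := if Nat.even j then 0 else if Nat.even i then 1 else -1.

Lemma next_op_calD i j f x : (j < i)%nat -> ex_derive (calD (i - j) f) x -> x <> 0 ->
  next_op i (calD (i - j) f) x = calD (S i - j) f x + sg i j * (2 / x) * calD (i - j) f x.
Proof.
  intros Hj He Hx. replace (S i - j)%nat with (S (i - j)) by lia.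
  rewrite calD_S. unfold next_op, sg. rewrite (Nat.even_sub i j) by lia.
  destruct (Nat.even i), (Nat.even j); simpl; try ring; rewrite Dr_expand; auto; ring.
Qed.

(* The weight w = I / phi with I(r) = int_r^1 l phi(l) dl, so that d = phi^{1-gamma} w,
   and the first-order coefficient v_m = -r + m w'. *)
Section Weight.
Variable phi : R -> R.

Definition Iphi (x : R) : R := RInt (fun l => l * phi l) x 1.
Definition weight (x : R) : R := Iphi x / phi x.
Definition vcoef (m : nat) (x : R) : R := - x + INR m * Derive weight x.

Lemma Lm_prefactor gamma m x : 0 < phi x ->
  Rpower (rhobar phi x) (1 + INR m * (gamma - 1)) * dfun gamma phi x ^ m
  = phi x * weight x ^ m.
Proof.
  intros Hp. unfold dfun, weight, rhobar, Rdiv.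
  rewrite !Rpow_mult_distr, <- Rpower_pow, Rpower_mult, pow_inv by apply exp_pos.
  assert (E : Rpower (phi x) (1 + INR m * (gamma - 1)) * Rpower (phi x) (- gamma * INR m)
              = phi x * / phi x ^ m).
  { rewrite <- Rpower_plus, <- (Rpower_pow m (phi x)), <- Rpower_Ropp by auto.
    rewrite <- (Rpower_1 (phi x)) at 2 by auto.
    rewrite <- Rpower_plus; f_equal; ring. }
  unfold Iphi. rewrite <- Rmult_assoc, E; ring.
Qed.

Lemma Lm_flux_factor gamma m x : 0 < phi x ->
  Rpower (rhobar phi x) (gamma + INR m * (gamma - 1)) * dfun gamma phi x ^ (1 + m)
  = phi x * weight x ^ S m.
Proof.
  intros Hp. rewrite <- (Lm_prefactor gamma (S m) x Hp), S_INR.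
  do 2 f_equal; ring.
Qed.

Hypothesis phi_derivable : forall y, ex_derive phi y.
Hypothesis phi_pos : forall y, 0 <= y <= 1 -> 0 < phi y.

Lemma phi_continuous y : continuous phi y.
Proof. apply ex_derive_continuous_R, phi_derivable. Qed.

Lemma Iphi_derive x : is_derive Iphi x (- (x * phi x)).
Proof.
  assert (Hc : forall y, continuous (fun l => l * phi l) y).
  { intros y; apply continuous_mult_R; [apply continuous_id | apply phi_continuous]. }
  apply (is_derive_RInt' (fun l => l * phi l) (fun a => RInt (fun l => l * phi l) a 1) x 1); auto.
  apply filter_forall; intros a.
  apply (RInt_correct (V := R_CompleteNormedModule)),
        (ex_RInt_continuous (V := R_CompleteNormedModule)); auto.
Qed.

Lemma Iphi_pos x : 0 <= x < 1 -> 0 < Iphi x.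
Proof.
  intros Hx. unfold Iphi. apply RInt_gt_0; [lra| |].
  - intros y Hy. apply Rmult_lt_0_compat; [lra | apply phi_pos; lra].
  - intros y _. apply continuous_mult_R; [apply continuous_id | apply phi_continuous].
Qed.

Lemma ex_derive_weight x : phi x <> 0 -> ex_derive weight x.
Proof.
  intros Hn. unfold weight, Rdiv. apply ex_derive_mult; [eexists; apply Iphi_derive|].
  apply ex_derive_inv; auto.
Qed.

Lemma ex_derive_flux m x : phi x <> 0 -> ex_derive (fun s => phi s * weight s ^ m) x.
Proof. intros; apply ex_derive_mult; auto; apply ex_derive_pow, ex_derive_weight; auto. Qed.

(* (phi w^{m+1})' = v_m phi w^m on (0,1), using (phi w)' = I' = -r phi. *)
Lemma flux_derive m x : 0 < x < 1 ->
  Derive (fun s => phi s * weight s ^ S m) x = vcoef m x * (phi x * weight x ^ m).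
Proof.
  intros Hx. assert (Hpx : phi x <> 0) by (apply Rgt_not_eq, phi_pos; lra).
  rewrite (Derive_ext_loc _ (fun s => Iphi s * weight s ^ m)).
  2:{ apply (locally_interval_eq 0 1 x); auto. intros t Ht. simpl. unfold weight.
      field. apply Rgt_not_eq, phi_pos; lra. }
  rewrite Derive_mult, Derive_pow, (is_derive_unique _ _ _ (Iphi_derive x)).
  - unfold vcoef. destruct m; simpl; [field; auto|].
    replace (Iphi x) with (phi x * weight x) by (unfold weight; field; auto).
    ring.
  - apply ex_derive_weight; auto.
  - eexists; apply Iphi_derive.
  - apply ex_derive_pow, ex_derive_weight; auto.
Qed.

Lemma Lm_form gamma m f x : 0 < x < 1 -> ex_derive (Dr f) x ->
  Lm m gamma phi f x = vcoef m x * Dr f x + weight x * Derive (Dr f) x.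
Proof.
  intros Hx Hf. unfold Lm.
  assert (Hpx : 0 < phi x) by (apply phi_pos; lra).
  assert (Hwx : 0 < weight x) by (apply Rdiv_lt_0_compat; auto; apply Iphi_pos; lra).
  rewrite (Derive_ext_loc _ (fun s => (phi s * weight s ^ S m) * Dr f s)).
  2:{ apply (locally_interval_eq 0 1 x); auto. intros t Ht.
      rewrite Lm_flux_factor; auto; apply phi_pos; lra. }
  rewrite Lm_prefactor, Derive_mult, flux_derive by (auto; apply ex_derive_flux; lra).
  simpl; field; split; [apply pow_nonzero|]; lra.
Qed.

Lemma Lmstar_form gamma m h x : 0 < x < 1 -> ex_derive (Derive h) x ->
  Lmstar m gamma phi h x = vcoef m x * Derive h x + weight x * Dr (Derive h) x.
Proof.
  intros Hx Hh. unfold Lmstar.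
  assert (Hpx : 0 < phi x) by (apply phi_pos; lra).
  assert (Hwx : 0 < weight x) by (apply Rdiv_lt_0_compat; auto; apply Iphi_pos; lra).
  rewrite (Dr_ext_loc _ (fun s => (phi s * weight s ^ S m) * Derive h s)).
  2:{ apply (locally_interval_eq 0 1 x); auto. intros t Ht.
      rewrite Lm_flux_factor; auto; apply phi_pos; lra. }
  rewrite Lm_prefactor, Dr_mult, flux_derive by (auto; try lra; apply ex_derive_flux; lra).
  simpl; field; split; [apply pow_nonzero|]; lra.
Qed.

Lemma smooth_vcoef a b N m : smooth_on a b (S N) weight -> smooth_on a b N (vcoef m).
Proof.
  intros Hw. unfold vcoef. apply smooth_plus.
  - apply (smooth_ext _ _ _ (fun x => (-1) * x)); [intros; ring|].
    apply smooth_scal, smooth_id.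
  - apply smooth_scal, smooth_Derive; auto.
Qed.

(* The coefficient M_i of the commutator of next_op i with calL_i. *)
Definition comm_coef (i : nat) (x : R) : R :=
  x * Derive (vcoef i) x + (if Nat.even i then 2 else -2) * vcoef i x.

Lemma smooth_comm_coef a b N i : smooth_on a b (S (S N)) weight -> smooth_on a b N (comm_coef i).
Proof.
  intros Hw. unfold comm_coef. apply smooth_plus.
  - apply smooth_mult; [apply smooth_id | apply smooth_Derive, smooth_vcoef; auto].
  - apply smooth_scal, smooth_vcoef, smooth_pred; auto.
Qed.

(* From here on the weight is assumed C^3 on (0,1), enough for one commutation step. *)
Hypothesis weight_smooth : smooth_on 0 1 3 weight.

Lemma vcoef_smooth m : smooth_on 0 1 2 (vcoef m).
Proof. apply smooth_vcoef, weight_smooth. Qed.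

Lemma Dr_Lm_commute gamma m f x : smooth_on 0 1 3 f -> 0 < x < 1 ->
  Dr (Lm m gamma phi f) x
  = Lmstar (S m) gamma phi (Dr f) x + (2 * vcoef m x / x + Derive (vcoef m) x) * Dr f x.
Proof.
  intros Hf Hx. assert (Hx0 : x <> 0) by lra.
  assert (HDf : smooth_on 0 1 2 (Dr f)) by (apply smooth_Dr; auto; lra).
  assert (HDDf : smooth_on 0 1 1 (Derive (Dr f))) by (apply smooth_Derive; auto).
  pose proof (vcoef_smooth m) as Hv.
  rewrite (Dr_ext_loc _ (fun s => vcoef m s * Dr f s + weight s * Derive (Dr f) s)).
  2:{ apply (locally_interval_eq 0 1 x); auto. intros t Ht.
      apply Lm_form; auto. eapply smooth_ex_derive; eauto. }
  rewrite Dr_plus, !Dr_mult, Lmstar_form, (Dr_expand (Dr f) x);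
    try (eapply smooth_ex_derive; eauto; fail); auto.
  - unfold vcoef; rewrite S_INR; field; auto.
  - apply ex_derive_mult; eapply smooth_ex_derive; eauto.
  - apply ex_derive_mult; eapply smooth_ex_derive; eauto.
Qed.

Lemma Derive_Lmstar_commute gamma m h x : smooth_on 0 1 3 h -> 0 < x < 1 ->
  Derive (Lmstar m gamma phi h) x
  = Lm (S m) gamma phi (Derive h) x + (Derive (vcoef m) x - 2 * vcoef m x / x) * Derive h x.
Proof.
  intros Hh Hx. assert (Hx0 : x <> 0) by lra.
  assert (Hg : smooth_on 0 1 2 (Derive h)) by (apply smooth_Derive; auto).
  assert (HDg : smooth_on 0 1 1 (Dr (Derive h))) by (apply smooth_Dr; auto; lra).
  pose proof (vcoef_smooth m) as Hv.
  rewrite (Derive_ext_loc _ (fun s => vcoef m s * Derive h s + weight s * Dr (Derive h) s)).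
  2:{ apply (locally_interval_eq 0 1 x); auto. intros t Ht.
      apply Lmstar_form; auto. eapply smooth_ex_derive; eauto. }
  rewrite Derive_plus, !Derive_mult, Lm_form, (Dr_expand (Derive h) x);
    try (eapply smooth_ex_derive; eauto; fail); auto.
  - unfold vcoef; rewrite S_INR; field; auto.
  - apply ex_derive_mult; eapply smooth_ex_derive; eauto.
  - apply ex_derive_mult; eapply smooth_ex_derive; eauto.
Qed.

Lemma next_op_calLD gamma i X x : smooth_on 0 1 3 (calD i X) -> 0 < x < 1 ->
  next_op i (calLD i gamma phi X) x
  = calLD (S i) gamma phi X x + comm_coef i x / x * calD (S i) X x.
Proof.
  intros HX Hx. unfold calLD, comm_coef. rewrite calD_S, Nat.even_succ, <- Nat.negb_even.
  unfold next_op. destruct (Nat.even i); simpl.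
  - rewrite Dr_Lm_commute; auto. field; lra.
  - rewrite Derive_Lmstar_commute; auto. field; lra.
Qed.

Lemma ex_derive_calLD gamma i X x : smooth_on 0 1 4 (calD i X) -> 0 < x < 1 ->
  ex_derive (calLD i gamma phi X) x.
Proof.
  intros HX Hx. pose proof (vcoef_smooth i) as Hv. unfold calLD. destruct (Nat.even i).
  - assert (H3 : smooth_on 0 1 3 (Dr (calD i X))) by (apply smooth_Dr; auto; lra).
    apply (ex_derive_ext_loc (fun s => vcoef i s * Dr (calD i X) s + weight s * Derive (Dr (calD i X)) s)).
    { apply (locally_interval_eq 0 1 x); auto. intros t Ht.
      symmetry; apply Lm_form; auto. eapply smooth_ex_derive; eauto. }
    apply (ex_derive_plus (fun s => vcoef i s * Dr (calD i X) s)); apply ex_derive_mult;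
      try (eapply smooth_ex_derive; eauto; fail).
    apply smooth_Derive in H3; eapply smooth_ex_derive; eauto.
  - assert (H3 : smooth_on 0 1 3 (Derive (calD i X))) by (apply smooth_Derive; auto).
    assert (H2 : smooth_on 0 1 2 (Dr (Derive (calD i X)))) by (apply smooth_Dr; auto; lra).
    apply (ex_derive_ext_loc (fun s => vcoef i s * Derive (calD i X) s + weight s * Dr (Derive (calD i X)) s)).
    { apply (locally_interval_eq 0 1 x); auto. intros t Ht.
      symmetry; apply Lmstar_form; auto. eapply smooth_ex_derive; eauto. }
    apply (ex_derive_plus (fun s => vcoef i s * Derive (calD i X) s)); apply ex_derive_mult;
      eapply smooth_ex_derive; eauto.
Qed.

End Weight.

Lemma Derive_div_pow g n x : ex_derive g x -> x <> 0 ->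
  ex_derive (fun s => g s / s ^ n) x /\
  Derive (fun s => g s / s ^ n) x = (x * Derive g x - INR n * g x) / x ^ S n.
Proof.
  intros Hg Hx.
  assert (Hid : ex_derive (fun s : R => s) x) by apply ex_derive_id.
  assert (Hpow : ex_derive (fun s : R => s ^ n) x) by apply (ex_derive_pow (fun s => s)), Hid.
  assert (Hpow0 : x ^ n <> 0) by (apply pow_nonzero; auto).
  assert (Hinv : ex_derive (fun s : R => / s ^ n) x) by (apply (ex_derive_inv (fun s => s ^ n)); auto).
  unfold Rdiv. split; [apply ex_derive_mult; auto|].
  rewrite Derive_mult by auto. rewrite (Derive_inv (fun s => s ^ n)) by auto.
  rewrite (Derive_pow (fun s => s)) by auto. rewrite Derive_id.
  destruct n; simpl; [field; auto|].
  field; split; auto; apply pow_nonzero; auto.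
Qed.

Lemma next_op_term i j G X x : (j < i)%nat -> ex_derive G x ->
  ex_derive (calD (i - j) X) x -> x <> 0 ->
  next_op i (fun s => G s / s ^ S j * calD (i - j) X s) x
  = G x / x ^ S j * calD (S i - j) X x
    + ((x * Derive G x - INR (S j) * G x) / x ^ S (S j) + sg i j * (2 / x) * (G x / x ^ S j))
      * calD (i - j) X x.
Proof.
  intros Hj HG HX Hx. destruct (Derive_div_pow G (S j) x HG Hx) as [Hd Hdv].
  rewrite next_op_mult, Hdv, next_op_calD; auto. ring.
Qed.

(* Coefficients G_j of the expansion at level i+1, built from those at level i:
   M_i enters at j = 0, and the derivative of G_{j-1} r^{-j} plus the parity
   defect of next_op at j > 0. *)
Definition next_G (phi : R -> R) (i : nat) (G : nat -> R -> R) (j : nat) (x : R) : R :=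
  G j x + match j with
          | O => comm_coef phi i x
          | S j' => x * Derive (G j') x - INR j * G j' x + 2 * sg i j' * G j' x
          end.

Lemma smooth_next_G a b N phi i G : smooth_on a b (S (S N)) (weight phi) ->
  (forall j, smooth_on a b (S N) (G j)) -> forall j, smooth_on a b N (next_G phi i G j).
Proof.
  intros Hw HG [|j]; unfold next_G; apply smooth_plus; [apply smooth_pred; auto| |apply smooth_pred; auto|].
  - apply smooth_comm_coef; auto.
  - apply smooth_plus; [apply smooth_minus|].
    + apply smooth_mult; [apply smooth_id | apply smooth_Derive; auto].
    + apply smooth_scal, smooth_pred; auto.
    + apply smooth_scal, smooth_pred; auto.
Qed.

Lemma next_G_vanish phi i G : (forall j x, (i <= j)%nat -> G j x = 0) ->
  forall j x, (S i <= j)%nat -> next_G phi i G j x = 0.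
Proof.
  intros H0 [|j] x Hj; [lia|]. unfold next_G.
  rewrite (Derive_ext (G j) (fun _ => 0)) by (intros; apply H0; lia).
  rewrite Derive_const, !H0 by lia. ring.
Qed.

(* The bookkeeping of the induction step: the terms produced by next_op
   regroup into the level-(i+1) expansion (D k stands for calD_k X (x)). *)
Lemma expansion_reindex phi i G (D : nat -> R) x : x <> 0 -> G i x = 0 ->
  comm_coef phi i x / x * D (S i)
  + sum_lt i (fun j => G j x / x ^ S j * D (S i - j)%nat
      + ((x * Derive (G j) x - INR (S j) * G j x) / x ^ S (S j)
         + sg i j * (2 / x) * (G j x / x ^ S j)) * D (i - j)%nat)
  = sum_lt (S i) (fun j => next_G phi i G j x / x ^ S j * D (S i - j)%nat).
Proof.
  intros Hx HGi. rewrite sum_lt_plus, sum_lt_shift.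
  assert (Hshift : sum_lt i (fun j => G j x / x ^ S j * D (S i - j)%nat)
                 = G 0%nat x / x * D (S i)
                   + sum_lt i (fun j => G (S j) x / x ^ S (S j) * D (i - j)%nat)).
  { transitivity (sum_lt (S i) (fun j => G j x / x ^ S j * D (S i - j)%nat)).
    - cbn [sum_lt]. rewrite HGi. unfold Rdiv; ring.
    - rewrite sum_lt_shift. cbn [Nat.sub pow]. rewrite Rmult_1_r. reflexivity. }
  rewrite Hshift.
  rewrite (sum_lt_ext i (fun j => next_G phi i G (S j) x / x ^ S (S j) * D (S i - S j)%nat)
    (fun j => G (S j) x / x ^ S (S j) * D (i - j)%nat
      + ((x * Derive (G j) x - INR (S j) * G j x) / x ^ S (S j)
         + sg i j * (2 / x) * (G j x / x ^ S j)) * D (i - j)%nat)).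
  - rewrite sum_lt_plus. unfold next_G. simpl (S i - 0)%nat. field; auto.
  - intros j Hj. replace (S i - S j)%nat with (i - j)%nat by lia.
    unfold next_G. simpl; field; split; auto; apply pow_nonzero; auto.
Qed.

Definition expansion_at (gamma : R) (phi : R -> R) (i : nat) (G : nat -> R -> R)
  (X : R -> R) (x : R) : Prop :=
  calD i (Lm 0 gamma phi X) x
  = calLD i gamma phi X x + sum_lt i (fun j => G j x / x ^ S j * calD (i - j) X x).

Lemma expansion_step gamma phi N i G X :
  (forall y, ex_derive phi y) -> (forall y, 0 <= y <= 1 -> 0 < phi y) ->
  smooth_on 0 1 3 (weight phi) -> (i + 4 <= N)%nat -> smooth_on 0 1 N X ->
  (forall j, smooth_on 0 1 1 (G j)) -> (forall j x, (i <= j)%nat -> G j x = 0) ->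
  (forall x, 0 < x < 1 -> expansion_at gamma phi i G X x) ->
  forall x, 0 < x < 1 -> expansion_at gamma phi (S i) (next_G phi i G) X x.
Proof.
  intros Hd Hp Hw HN HX HG HG0 IH x Hx. assert (Hx0 : x <> 0) by lra.
  assert (HD : forall m k, (m + k <= N)%nat -> smooth_on 0 1 k (calD m X)).
  { intros m k Hmk. apply smooth_calD, (smooth_le _ _ _ N); auto. }
  assert (HDx : forall j, (j < i)%nat -> ex_derive (calD (i - j) X) x).
  { intros j Hj. apply (smooth_ex_derive 0 1 0); auto. apply HD; lia. }
  assert (HGx : forall j, ex_derive (G j) x) by (intros; eapply smooth_ex_derive; eauto).
  assert (Hterm : forall j, (j < i)%nat ->
            ex_derive (fun s => G j s / s ^ S j * calD (i - j) X s) x).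
  { intros j Hj. apply ex_derive_mult; [apply Derive_div_pow | apply HDx]; auto. }
  assert (HL : ex_derive (calLD i gamma phi X) x).
  { apply (ex_derive_calLD phi Hd Hp Hw); [apply HD; lia | exact Hx]. }
  assert (HS : ex_derive (fun s => sum_lt i (fun j => G j s / s ^ S j * calD (i - j) X s)) x).
  { apply Derive_sum_lt; auto. }
  unfold expansion_at.
  rewrite calD_S, (next_op_ext i _ (fun s => calLD i gamma phi X s
                     + sum_lt i (fun j => G j s / s ^ S j * calD (i - j) X s))) by auto.
  rewrite next_op_plus, next_op_sum, (next_op_calLD phi Hd Hp Hw); auto.
  2: apply HD; lia.
  rewrite (sum_lt_ext i _ (fun j => G j x / x ^ S j * calD (S i - j) X x
      + ((x * Derive (G j) x - INR (S j) * G j x) / x ^ S (S j)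
         + sg i j * (2 / x) * (G j x / x ^ S j)) * calD (i - j) X x))
    by (intros; apply next_op_term; auto).
  rewrite <- (expansion_reindex phi i G (fun k => calD k X x)) by auto.
  ring.
Qed.

Lemma commutator_expansion gamma phi a b N : a <= 0 -> 1 <= b ->
  (forall y, ex_derive phi y) -> (forall y, 0 <= y <= 1 -> 0 < phi y) ->
  smooth_on a b N (weight phi) ->
  forall i, (i + 3 <= N)%nat -> exists G : nat -> R -> R,
    (forall j, smooth_on a b (N - 2 - i) (G j)) /\
    (forall j x, (i <= j)%nat -> G j x = 0) /\
    (forall X, smooth_on 0 1 N X -> forall x, 0 < x < 1 -> expansion_at gamma phi i G X x).
Proof.
  intros Ha Hb Hd Hp Hw. induction i as [|i IH]; intros HN.
  - exists (fun _ _ => 0). split; [intros; apply smooth_const|split; auto].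
    intros X HX x Hx. unfold expansion_at, calLD, calD; simpl; ring.
  - destruct IH as [G [HGs [HG0 HGid]]]; [lia|].
    exists (next_G phi i G). split; [|split].
    + apply smooth_next_G; [apply (smooth_le _ _ _ N); auto; lia|].
      intros j. replace (S (N - 2 - S i)) with (N - 2 - i)%nat by lia. auto.
    + apply next_G_vanish; auto.
    + intros X HX. apply (expansion_step gamma phi N); auto; try lia.
      * apply (smooth_subinterval a b); try lra. apply (smooth_le _ _ _ N); auto; lia.
      * intros j. apply (smooth_subinterval a b); try lra.
        apply (smooth_le _ _ _ (N - 2 - i)); auto; lia.
Qed.

Lemma pos_nbhd_01 (phi : R -> R) : (forall y, continuous phi y) ->
  (forall r, 0 <= r <= 1 -> 0 < phi r) ->
  exists e, 0 < e /\ forall y, -e < y < 1 + e -> 0 < phi y.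
Proof.
  intros Hc Hp.
  assert (Hloc : forall x, 0 <= x <= 1 -> locally x (fun y => 0 < phi y < phi x + 1)).
  { intros x Hx. apply (Hc x (fun t => 0 < t < phi x + 1)).
    apply locally_interval; pose proof (Hp x Hx); lra. }
  destruct (Hloc 0 ltac:(lra)) as [e0 He0], (Hloc 1 ltac:(lra)) as [e1 He1].
  exists (Rmin e0 e1); split; [apply Rmin_case; apply cond_pos|].
  intros y Hy. pose proof (Rmin_l e0 e1); pose proof (Rmin_r e0 e1).
  destruct (Rlt_le_dec y 0) as [Hy0|Hy0]; [|destruct (Rle_lt_dec y 1) as [Hy1|Hy1]].
  - apply He0. change (Rabs (y - 0) < e0). rewrite Rabs_left; lra.
  - apply Hp; lra.
  - apply He1. change (Rabs (y - 1) < e1). rewrite Rabs_right; lra.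
Qed.

Lemma smooth_weight phi a b k : (forall y, ex_derive phi y) ->
  (forall x, a < x < b -> 0 < phi x) -> smooth_on a b k phi -> smooth_on a b k (weight phi).
Proof.
  intros Hd Hp Hk. unfold weight, Rdiv. apply smooth_mult.
  - apply smooth_pred. split; [intros x _; eexists; apply Iphi_derive; auto|].
    apply (smooth_ext _ _ _ (fun x => (-1) * (x * phi x))).
    { intros x _. rewrite (is_derive_unique _ _ _ (Iphi_derive phi Hd x)). ring. }
    apply smooth_scal, smooth_mult; [apply smooth_id | auto].
  - apply smooth_inv; auto. intros x Hx; apply Rgt_not_eq, Hp; auto.
Qed.

Lemma bounded_01 (h : R -> R) : (forall x, 0 <= x <= 1 -> continuous h x) ->
  exists M, forall r, 0 <= r <= 1 -> Rabs (h r) <= M.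
Proof.
  intros H. destruct (continuity_ab_maj (fun r => Rabs (h r)) 0 1) as [m [Hm _]]; [lra| |].
  - intros c Hc. apply continuity_pt_filterlim, continuous_Rabs_comp; auto.
  - exists (Rabs (h m)); auto.
Qed.

(* d = E I with E = rho^{-gamma}, and its derivative d'. *)
Definition Efun (gamma : R) (phi : R -> R) (x : R) : R := Rpower (phi x) (- gamma).

Definition dprime (gamma : R) (phi : R -> R) (x : R) : R :=
  - gamma * (Derive phi x / phi x) * Efun gamma phi x * Iphi phi x
  + Efun gamma phi x * (- (x * phi x)).

Lemma Efun_derive gamma (phi : R -> R) x : 0 < phi x -> ex_derive phi x ->
  is_derive (Efun gamma phi) x (- gamma * (Derive phi x / phi x) * Efun gamma phi x).
Proof.
  intros Hp Hd. unfold Efun, Rpower. auto_derive; auto. rewrite Rmult_1_l; reflexivity.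
Qed.

Lemma dfun_derive gamma (phi : R -> R) x : (forall y, ex_derive phi y) -> 0 < phi x ->
  is_derive (dfun gamma phi) x (dprime gamma phi x).
Proof.
  intros Hd Hp.
  exact (is_derive_mult (Efun gamma phi) (Iphi phi) x _ _
           (Efun_derive gamma phi x Hp (Hd x)) (Iphi_derive phi Hd x) Rmult_comm).
Qed.

Lemma dprime_continuous gamma (phi : R -> R) x : (forall y, ex_derive phi y) ->
  (forall y, continuous (Derive phi) y) -> 0 < phi x -> continuous (dprime gamma phi) x.
Proof.
  intros Hd Hdc Hp.
  assert (HE : continuous (Efun gamma phi) x).
  { apply ex_derive_continuous_R; eexists; apply Efun_derive; auto. }
  assert (HI : continuous (Iphi phi) x).
  { apply ex_derive_continuous_R; eexists; apply Iphi_derive; auto. }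
  assert (Hc : continuous phi x) by apply (phi_continuous phi Hd).
  assert (Hinv : continuous (fun y => / phi y) x) by (apply continuous_inv_pt; auto; lra).
  unfold dprime, Rdiv.
  apply continuous_plus_R; repeat apply continuous_mult_R; auto;
    try apply continuous_const; try apply continuous_id.
  apply (continuous_opp (fun y => y * phi y)), continuous_mult_R; auto; apply continuous_id.
Qed.

(* d and d' never vanish simultaneously on [0,1]: d > 0 on [0,1), and at r = 1
   where I = 0 one has d'(1) = -phi(1)^{1-gamma} < 0. *)
Lemma d_dprime_nonvanishing gamma (phi : R -> R) r : (forall y, ex_derive phi y) ->
  (forall y, 0 <= y <= 1 -> 0 < phi y) -> 0 <= r <= 1 ->
  0 < dfun gamma phi r ^ 2 + dprime gamma phi r ^ 2.
Proof.
  intros Hd Hp Hr.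
  assert (HE : 0 < Efun gamma phi r) by (unfold Efun, Rpower; apply exp_pos).
  destruct (Rlt_le_dec r 1).
  - assert (0 < dfun gamma phi r).
    { change (0 < Efun gamma phi r * Iphi phi r).
      apply Rmult_lt_0_compat; auto. apply (Iphi_pos phi Hd Hp); lra. }
    pose proof (pow2_ge_0 (dprime gamma phi r)). simpl; nra.
  - assert (r = 1) by lra; subst r.
    assert (HI : Iphi phi 1 = 0) by apply (RInt_point (V := R_CompleteNormedModule)).
    assert (dprime gamma phi 1 < 0).
    { unfold dprime. rewrite HI, Rmult_0_r, Rplus_0_l. pose proof (Hp 1 ltac:(lra)). nra. }
    pose proof (pow2_ge_0 (dfun gamma phi 1)). simpl; nra.
Qed.

(* Any coefficient G_j can be written as c_0 d + c_1 d' with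
   c_l = G_j d^{(l)} / (d^2 + d'^2); these are the only nonzero c_{ijkl} (k = 1). *)
Definition qcoef (G : nat -> R -> R) (d d1 : R -> R) (j k l : nat) (r : R) : R :=
  match k, l with
  | 1%nat, 0%nat => G j r * d r / (d r ^ 2 + d1 r ^ 2)
  | 1%nat, 1%nat => G j r * d1 r / (d r ^ 2 + d1 r ^ 2)
  | _, _ => 0
  end.

Lemma qcoef_bounded (G : nat -> R -> R) (d d1 : R -> R) j k l :
  (forall r, 0 <= r <= 1 -> continuous (G j) r /\ continuous d r /\ continuous d1 r) ->
  (forall r, 0 <= r <= 1 -> d r ^ 2 + d1 r ^ 2 <> 0) ->
  exists M, forall r, 0 <= r <= 1 -> Rabs (qcoef G d d1 j k l r) <= M.
Proof.
  intros Hc Hn.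
  assert (Hq : forall dl : R -> R, (forall r, 0 <= r <= 1 -> continuous dl r) ->
            exists M, forall r, 0 <= r <= 1 -> Rabs (G j r * dl r / (d r ^ 2 + d1 r ^ 2)) <= M).
  { intros dl Hdl. apply (bounded_01 (fun r => G j r * dl r / (d r ^ 2 + d1 r ^ 2))).
    intros r Hr. destruct (Hc r Hr) as [HG [Hd Hd1]]. unfold Rdiv.
    repeat apply continuous_mult_R; auto.
    apply continuous_inv_pt; auto. simpl.
    apply continuous_plus_R; repeat apply continuous_mult_R; auto; apply continuous_const. }
  destruct k as [|[|k]]; [| |exists 0; intros; simpl; rewrite Rabs_R0; lra].
  - exists 0; intros; simpl; rewrite Rabs_R0; lra.
  - destruct l as [|[|l]]; [apply Hq | apply Hq | exists 0; intros; simpl; rewrite Rabs_R0; lra];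
      intros r Hr; apply Hc; auto.
Qed.

Lemma qij_qcoef gamma phi G (d1 : R -> R) i j r : r <> 0 ->
  is_derive (dfun gamma phi) r (d1 r) -> dfun gamma phi r ^ 2 + d1 r ^ 2 <> 0 ->
  qij (fun _ => qcoef G (dfun gamma phi) d1) gamma phi i j r = G j r / r ^ S j.
Proof.
  intros Hr Hd Hn. unfold qij. rewrite sum_Sn_m by lia.
  rewrite (sum_n_m_ext_loc _ (fun _ => zero) 2 (2 + j)), sum_n_m_const_zero.
  - rewrite sum_n_Sm, sum_n_n by lia. simpl Derive_n.
    replace (Derive (fun x => dfun gamma phi x) r) with (d1 r)
      by (symmetry; apply is_derive_unique; exact Hd).
    replace (2 + j - 1)%nat with (S j) by lia.
    unfold plus, zero; simpl in *. field. split; [apply pow_nonzero; auto|]. split; auto.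
    rewrite !Rmult_1_r in Hn; auto.
  - intros k Hk. destruct k as [|[|k]]; try lia.
    rewrite (sum_n_m_ext _ (fun _ => zero)), sum_n_m_const_zero.
    + unfold zero; simpl; unfold Rdiv; ring.
    + intros l; unfold zero; simpl; ring.
Qed.

Theorem lemmaA2 :
  forall gamma : R, 1 < gamma ->
  forall i : nat, (1 <= i)%nat ->
  exists N : nat,
  forall phi : R -> R,
    Ck N phi ->
    (forall r, 0 <= r <= 1 -> 0 < phi r) ->
    Derive phi 0 = 0 ->
    exists c : nat -> nat -> nat -> nat -> R -> R,
      (forall j k l, exists M : R, forall r, 0 <= r <= 1 -> Rabs (c i j k l r) <= M) /\
      (forall X : R -> R, Ck N X ->
        forall r, 0 < r < 1 ->
          calD i (Lm 0 gamma phi X) r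
          = calLD i gamma phi X r
            + sum_n_m (fun j => qij c gamma phi i j r * calD (i - j) X r) 0 (i - 1)).
Proof.
  intros gamma _ i Hi. exists (i + 3)%nat. intros phi Hphi Hp _.
  assert (Hd : forall y, ex_derive phi y) by (intros y; apply (proj1 Hphi 1%nat y); lia).
  assert (Hdc : forall y, continuous (Derive phi) y).
  { intros y. apply ex_derive_continuous_R, (proj1 Hphi 2%nat y); lia. }
  destruct (pos_nbhd_01 phi (phi_continuous phi Hd) Hp) as [e [He Hpe]].
  assert (Hw : smooth_on (-e) (1 + e) (i + 3) (weight phi))
    by (apply smooth_weight; auto; apply Ck_smooth; auto).
  destruct (commutator_expansion gamma phi (-e) (1 + e) (i + 3)
              ltac:(lra) ltac:(lra) Hd Hp Hw i ltac:(lia)) as [G [HGs [_ HGexp]]].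
  assert (Hnz : forall r, 0 <= r <= 1 -> dfun gamma phi r ^ 2 + dprime gamma phi r ^ 2 <> 0)
    by (intros; apply Rgt_not_eq, d_dprime_nonvanishing; auto).
  exists (fun _ => qcoef G (dfun gamma phi) (dprime gamma phi)). split.
  - intros j k l. apply qcoef_bounded; auto. intros r Hr. repeat split.
    + apply (smooth_continuous (-e) (1 + e) (i + 3 - 2 - i)); auto; lra.
    + apply ex_derive_continuous_R; eexists; apply dfun_derive; auto.
    + apply dprime_continuous; auto.
  - intros X HX r Hr. pose proof (HGexp X (Ck_smooth _ _ _ _ HX) r Hr) as Hexp.
    unfold expansion_at in Hexp. rewrite Hexp, sum_n_m_sum_lt.
    replace (S (i - 1)) with i by lia. f_equal. apply sum_lt_ext; intros j _.
    assert (Hr1 : 0 <= r <= 1) by lra.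
    rewrite (qij_qcoef gamma phi G (dprime gamma phi)); auto; [lra|].
    apply dfun_derive; auto.
Qed.
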